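(* Let $\Omega\subset\mathbb{R}^{2n}$ be a centrally symmetric convex body with $c^{\mathrm{lin}}_{\min}(\Omega)\ge\pi$, and let $(\ell,\ell')$ be a pair of transverse Lagrangian planes, with $\Pi_\ell$ the projection onto $\ell$ along $\ell'$ and $\Pi_{\ell'}$ the projection onto $\ell'$ along $\ell$. Then $(\Pi_\ell\Omega)^o_{\ell'}\subset\Pi_{\ell'}\Omega$, i.e. $(\Pi_\ell\Omega,\Pi_{\ell'}\Omega)$ is a Lagrangian polar dual pair.
   Context: Write $z=(x,p)\in\mathbb{R}^{2n}$, $\omega((x,p),(x',p'))=p\cdot x'-p'\cdot x$. $\mathrm{Sp}(n)$ is the group of linear automorphisms preserving $\omega$. $c^{\mathrm{lin}}_{\min}(\Omega)=\sup\{\pi R^2: S(B^{2n}(z_0,R))\subset\Omega,\ S\in\mathrm{Sp}(n),\ z_0\in\mathbb{R}^{2n}\}$ where $B^{2n}(z_0,R)$ is the closed Euclidean ball of radius $R$ centered at $z_0$. A Lagrangian plane is an $n$-dimensional subspace on which $\omega$ vanishes; $\ell,\ell'$ are transverse if $\ell\cap\ell'=0$. For a centrally symmetric convex body $X_\ell\subset\ell$, its Lagrangian polar dual in $\ell'$ is $X^o_{\ell'}=\{z'\in\ell':\omega(z,z')\le1\ \forall z\in X_\ell\}$; $(X_\ell,Y_{\ell'})$ is a Lagrangian polar dual pair if $X^o_{\ell'}\subset Y_{\ell'}$. *)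

(* Points z = (x,p) of R^{2n} are row vectors 'rV[R]_(n + n):
   x = lsubmx z (first n coordinates), p = rsubmx z (last n coordinates). *)
From HB Require Import structures.
From mathcomp Require Import all_boot all_order all_algebra.
From mathcomp Require Import all_classical all_reals all_analysis.
Import numFieldNormedType.Exports.
Set Implicit Arguments. Unset Strict Implicit. Unset Printing Implicit Defensive.
Import Order.TTheory GRing.Theory Num.Theory.
Local Open Scope ring_scope.
Local Open Scope classical_set_scope.

Section Defs.
Variables (R : realType) (n : nat).

Notation pt := 'rV[R]_(n + n).

Definition dotv (a b : 'rV[R]_n) : R := (a *m b^T) 0 0.

Definition omega (z z' : pt) : R :=
  dotv (rsubmx z) (lsubmx z') - dotv (rsubmx z') (lsubmx z).

Definition sqnorm (z : pt) : R := (z *m z^T) 0 0.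

Definition cball2n (z0 : pt) (r : R) : set pt :=
  [set z | sqnorm (z - z0) <= r ^+ 2].

Definition symplectic (S : 'M[R]_(n + n)) : Prop :=
  S \in unitmx /\ forall u v : pt, omega (u *m S) (v *m S) = omega u v.

Definition clin_min (Omega : set pt) : R :=
  sup [set pi * r ^+ 2 | r in [set r : R | 0 < r /\
         exists (S : 'M[R]_(n + n)) (z0 : pt),
           symplectic S /\ (fun z => z *m S) @` cball2n z0 r `<=` Omega]].

Definition convex_set (Omega : set pt) : Prop :=
  forall a b : pt, Omega a -> Omega b -> forall t : R, 0 <= t <= 1 ->
    Omega (t *: a + (1 - t) *: b).

Definition centrally_symmetric_convex_body (Omega : set pt) : Prop :=
  compact Omega /\ convex_set Omega /\
  (exists (z0 : pt) (r : R), 0 < r /\ cball2n z0 r `<=` Omega) /\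
  (forall z : pt, Omega z -> Omega (- z)).

Definition lagrangian (L : 'M[R]_(n + n)) : Prop :=
  \rank L = n /\
  forall u v : pt, (u <= L)%MS -> (v <= L)%MS -> omega u v = 0.

Definition transverse (L L' : 'M[R]_(n + n)) : Prop :=
  \rank (L :&: L')%MS = 0%N.

Definition proj_along (L L' : 'M[R]_(n + n)) (z : pt) : pt :=
  z *m proj_mx L L'.

Definition lag_polar (X : set pt) (L' : 'M[R]_(n + n)) : set pt :=
  [set z' | (z' <= L')%MS /\ forall z, X z -> omega z z' <= 1].

Definition lag_polar_dual_pair (X Y : set pt) (L' : 'M[R]_(n + n)) : Prop :=
  lag_polar X L' `<=` Y.

End Defs.

(* The heart of the matter is that the omega-polar of Omega lies in Omega.
   Let omega w z' <= 1 on Omega, take a symplectic image S(B(0, r)) of a ball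
   inside Omega with r^2 close to 1 (symmetry and convexity recentre the ball at
   the origin) and put v := S^-1 z'.  The ball point r J v / |v|, mapped by S,
   pairs with z' to r |v|, so r |v| <= 1 and r^2 z' = S(r^2 v) lies in
   S(B(0, r)); convexity and closedness then give z' in Omega.  For z' in the
   Lagrangian plane L', omega (Pi_L w) z' = omega w z' because Pi_L' w pairs
   trivially with z', so the polar of Pi_L Omega in L' lies in Omega, and Pi_L'
   fixes its points. *)
From Pilot Require Import Defs.
From HB Require Import structures.
From mathcomp Require Import all_boot all_order all_algebra.
From mathcomp Require Import all_classical all_reals all_analysis.
From mathcomp Require Import ring lra.
Import numFieldNormedType.Exports.
Import Order.TTheory GRing.Theory Num.Theory.
Local Open Scope ring_scope.
Local Open Scope classical_set_scope.

Lemma closed_scale_lim (R : realType) (V : normedModType R) (A : set V) (z : V) :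
  closed A -> (forall s : R, 0 < s < 1 -> A (s *: z)) -> A z.
Proof.
move=> clA As.
apply: (@closed_cvg _ _ (at_left (1:R)) _ (fun s : R => s *: z) _ clA).
- near=> s; apply: As; apply/andP; split; near: s;
    [exact: nbhs_left_gt | exact: nbhs_left_lt].
- rewrite -[X in _ --> X]scale1r; apply: cvgZ; last exact: cvg_cst.
  apply: cvg_at_left_filter; exact: cvg_id.
Unshelve. all: end_near.
Qed.

Section SymplecticForm.
Variables (R : realType) (n : nat).
Notation pt := 'rV[R]_(n + n).

Lemma dotvDl (a b c : 'rV[R]_n) : dotv (a + b) c = dotv a c + dotv b c.
Proof. by rewrite /dotv mulmxDl mxE. Qed.

Lemma dotvDr (a b c : 'rV[R]_n) : dotv c (a + b) = dotv c a + dotv c b.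
Proof. by rewrite /dotv linearD /= mulmxDr mxE. Qed.

Lemma dotvZl k (a c : 'rV[R]_n) : dotv (k *: a) c = k * dotv a c.
Proof. by rewrite /dotv -scalemxAl mxE. Qed.

Lemma dotvZr k (a c : 'rV[R]_n) : dotv c (k *: a) = k * dotv c a.
Proof. by rewrite /dotv linearZ /= -scalemxAr mxE. Qed.

Lemma dotvv_ge0 (a : 'rV[R]_n) : 0 <= dotv a a.
Proof.
rewrite /dotv mxE; apply: sumr_ge0 => i _; rewrite mxE -expr2; exact: sqr_ge0.
Qed.

Lemma omegaDl (a b c : pt) : omega (a + b) c = omega a c + omega b c.
Proof. by rewrite /omega !linearD /= dotvDl dotvDr; lra. Qed.

Lemma omegaZl k (a c : pt) : omega (k *: a) c = k * omega a c.
Proof. by rewrite /omega !linearZ /= dotvZl dotvZr; lra. Qed.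

Lemma sqnormE (v : pt) :
  sqnorm v = dotv (lsubmx v) (lsubmx v) + dotv (rsubmx v) (rsubmx v).
Proof. by rewrite /sqnorm -{1 2}(hsubmxK v) tr_row_mx mul_row_col mxE. Qed.

Lemma sqnorm_ge0 (v : pt) : 0 <= sqnorm v.
Proof. by rewrite sqnormE addr_ge0 ?dotvv_ge0. Qed.

Lemma sqnormZ k (v : pt) : sqnorm (k *: v) = k ^+ 2 * sqnorm v.
Proof. by rewrite !sqnormE !linearZ /= !dotvZl !dotvZr; lra. Qed.

Lemma sqnorm0 : sqnorm (0 : pt) = 0.
Proof. by rewrite -(scale0r (0 : pt)) sqnormZ expr0n mul0r. Qed.

Definition cplx_struct (v : pt) : pt := row_mx (- rsubmx v) (lsubmx v).

Lemma omega_cplx_struct (v : pt) : omega (cplx_struct v) v = sqnorm v.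
Proof.
rewrite /omega /cplx_struct row_mxKl row_mxKr sqnormE.
by rewrite -[- rsubmx v]scaleN1r dotvZr; lra.
Qed.

Lemma sqnorm_cplx_struct (v : pt) : sqnorm (cplx_struct v) = sqnorm v.
Proof.
rewrite !sqnormE /cplx_struct row_mxKl row_mxKr.
by rewrite -[- rsubmx v]scaleN1r dotvZr dotvZl; lra.
Qed.

End SymplecticForm.
Arguments cplx_struct {R n}.

Section SymmetricConvex.
Variables (R : realType) (n : nat) (Omega : set 'rV[R]_(n + n)).
Notation pt := 'rV[R]_(n + n).
Hypotheses (cvxO : Defs.convex_set Omega) (symO : forall z : pt, Omega z -> Omega (- z)).

(* z0 + x and -(z0 - x) are images of ball points, with midpoint x. *)
Lemma symplectic_ball_center0 (S : 'M[R]_(n + n)) (z0 : pt) (r : R) :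
  (fun z => z *m S) @` cball2n z0 r `<=` Omega ->
  forall x : pt, sqnorm x <= r ^+ 2 -> Omega (x *m S).
Proof.
move=> sub x hx.
have Oplus : Omega ((z0 + x) *m S).
  by apply: sub; exists (z0 + x) => //; rewrite /cball2n /= addrAC subrr add0r.
have Ominus : Omega (- ((z0 - x) *m S)).
  apply: symO; apply: sub; exists (z0 - x) => //.
  by rewrite /cball2n /= addrAC subrr add0r -scaleN1r sqnormZ; lra.
have -> : x *m S = 2^-1 *: ((z0 + x) *m S) + (1 - 2^-1) *: (- ((z0 - x) *m S)).
  have -> : 1 - 2^-1 = 2^-1 :> R by lra.
  rewrite -scalerDr mulmxDl mulmxBl opprB [z0 *m S + _]addrC addrACA subrr addr0.
  by rewrite -mulr2n -scalerMnr scalerMnl -mulr_natr mulVf ?scale1r ?pnatr_eq0.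
have half01 : 0 <= (2^-1 : R) <= 1 by apply/andP; split; lra.
exact: cvxO _ _ Oplus Ominus _ half01.
Qed.

Lemma convex_scale0 (z : pt) (t : R) :
  Omega 0 -> Omega z -> 0 <= t <= 1 -> Omega (t *: z).
Proof.
move=> O0 Oz t01.
by rewrite -[t *: z]addr0 -(scaler0 _ (1 - t)); exact: cvxO _ _ Oz O0 _ t01.
Qed.

End SymmetricConvex.
Arguments symplectic_ball_center0 {R n Omega} cvxO symO {S z0 r}.
Arguments convex_scale0 {R n Omega}.

Section PolarInclusion.
Variables (R : realType) (n : nat) (Omega : set 'rV[R]_(n + n)).
Notation pt := 'rV[R]_(n + n).

Lemma lt_clin_min (s : R) : 0 < s -> pi * s < clin_min Omega ->
  exists r, [/\ 0 < r, s < r ^+ 2 & exists S z0,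
    symplectic S /\ (fun z => z *m S) @` cball2n z0 r `<=` Omega].
Proof.
move=> s0; rewrite /clin_min; set E := [set _ | _ in _] => piE.
have [E0|E0] := eqVneq E set0.
  by move: piE; rewrite E0 sup0 => h; have := pi_gt0 R; nra.
have [_ [r [r0 ball]] <-] := sup_gt (proj1 (set0P E) E0) piE.
by rewrite ltr_pM2l ?pi_gt0 // => sr; exists r.
Qed.

(* The pairing of z' with the image of r |v|^-1 J v, v := z' S^-1, is r |v|. *)
Lemma omega_polar_symplectic_ball (S : 'M[R]_(n + n)) (r : R) (z' : pt) :
  symplectic S -> 0 < r ->
  (forall x : pt, sqnorm x <= r ^+ 2 -> Omega (x *m S)) ->
  (forall w, Omega w -> omega w z' <= 1) ->
  r ^+ 2 * sqnorm (z' *m invmx S) <= 1.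
Proof.
move=> [Su Sw] r0 ball polar; set v := z' *m invmx S.
have [v0|v0] := eqVneq (sqnorm v) 0; first by rewrite v0 mulr0 ler01.
have vpos : 0 < sqnorm v by rewrite lt_neqAle eq_sym v0 sqnorm_ge0.
set q := Num.sqrt (sqnorm v).
have q0 : 0 < q by rewrite sqrtr_gt0.
have qv : q ^+ 2 = sqnorm v by rewrite sqr_sqrtr // ltW.
have : Omega (((r / q) *: cplx_struct v) *m S).
  apply: ball; rewrite sqnormZ sqnorm_cplx_struct -qv expr_div_n mulrAC -mulrA.
  by rewrite mulfV ?mulr1 // expf_neq0 // gt_eqF.
move/polar; rewrite -{1}(mulmxKV Su z') Sw omegaZl omega_cplx_struct -qv.
have -> : r / q * q ^+ 2 = r * q by rewrite expr2 mulrA divfK // gt_eqF.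
have rq0 : 0 <= r * q by rewrite mulr_ge0 // ltW.
by rewrite !expr2 => ?; nra.
Qed.

Lemma omega_polar_sub :
  centrally_symmetric_convex_body Omega -> pi <= clin_min Omega ->
  forall z', (forall w, Omega w -> omega w z' <= 1) -> Omega z'.
Proof.
move=> [cptO [cvxO [_ symO]]] piO z' polar.
apply: closed_scale_lim => [|s /andP[s0 s1]].
  by apply: compact_closed => //; exact: norm_hausdorff.
have [|r [r0 sr [S [z0 [Ssymp sub]]]]] := @lt_clin_min s s0.
  by apply: lt_le_trans piO; have := pi_gt0 R; nra.
have ball := symplectic_ball_center0 cvxO symO sub.
have bound := omega_polar_symplectic_ball _ _ _ Ssymp r0 ball polar.
have r20 : 0 < r ^+ 2 by rewrite exprn_gt0.
have Or2z : Omega (r ^+ 2 *: z').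
  rewrite -(mulmxKV (proj1 Ssymp) z') scalemxAl; apply: ball.
  by rewrite sqnormZ !expr2 in bound *; nra.
have O0 : Omega 0 by rewrite -(mul0mx _ S); apply: ball; rewrite sqnorm0 sqr_ge0.
have -> : s *: z' = (s / r ^+ 2) *: (r ^+ 2 *: z') by rewrite scalerA divfK ?gt_eqF.
apply: convex_scale0 => //; apply/andP; split; first by rewrite divr_ge0 ?ltW.
by rewrite ler_pdivrMr // mul1r ltW.
Qed.

End PolarInclusion.
Arguments omega_polar_sub {R n Omega}.

Section LagrangianSplitting.
Variables (R : realType) (n : nat) (L L' : 'M[R]_(n + n)).
Notation pt := 'rV[R]_(n + n).

Lemma transverse_capmx0 : transverse L L' -> (L :&: L' = 0)%MS.
Proof. by move=> tr; apply/eqP; rewrite -mxrank_eq0; apply/eqP. Qed.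

Lemma transverse_lagrangian_full :
  lagrangian L -> lagrangian L' -> transverse L L' -> row_full (L + L')%MS.
Proof.
move=> [rL _] [rL' _] tr; rewrite /row_full.
by have := mxrank_sum_cap L L'; rewrite rL rL' tr addn0 => ->.
Qed.

Lemma omega_proj_along_lagrangian (w z' : pt) :
  lagrangian L -> lagrangian L' -> transverse L L' -> (z' <= L')%MS ->
  omega (proj_along L L' w) z' = omega w z'.
Proof.
move=> lagL lagL' tr z'L'.
have wLL' : (w <= L + L')%MS by apply: submx_full; exact: transverse_lagrangian_full.
rewrite -[w in RHS](add_proj_mx (transverse_capmx0 tr) wLL') omegaDl.
by rewrite (lagL'.2 (w *m proj_mx L' L) z') ?proj_mx_sub // addr0.
Qed.

End LagrangianSplitting.
Arguments omega_proj_along_lagrangian {R n L L'}.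
Arguments transverse_capmx0 {R n L L'}.

Theorem mainTheorem10 (R : realType) (n : nat)
    (Omega : set 'rV[R]_(n + n)) (L L' : 'M[R]_(n + n)) :
  centrally_symmetric_convex_body Omega ->
  pi <= clin_min Omega ->
  lagrangian L -> lagrangian L' -> transverse L L' ->
  lag_polar_dual_pair (proj_along L L' @` Omega) (proj_along L' L @` Omega) L'.
Proof.
move=> bodyO piO lagL lagL' tr z' [z'L' polar].
exists z'; last by rewrite /proj_along proj_mx_id // capmxC transverse_capmx0.
apply: (omega_polar_sub bodyO piO) => w Ow.
rewrite -(omega_proj_along_lagrangian w z' lagL lagL' tr z'L').
by apply: polar; exists w.
Qed.
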